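(* For every BIMS channel with capacity $C$, the channel dispersion satisfies $$V^{\rm bec}(C)\le V\le V^{\rm bsc}(C).$$
   Context: A BIMS (binary-input memoryless symmetric) channel is a memoryless channel with input alphabet $\{x_0,x_1\}$, finite output alphabet $\mathcal Y$ and transition probabilities $P_{Y|X}(y|x)$. It is symmetric in Gallager's sense: the columns of the $2\times|\mathcal Y|$ transition matrix (rows indexed by inputs) can be partitioned into submatrices such that, in each submatrix, every row is a permutation of every other row and every column is a permutation of every other column. Inputs are equiprobable and logarithms are base 2. The capacity $C$ is $I(X;Y)$ under equiprobable inputs. For $\rho>-1$, $$F(\rho)=\sum_{x}\tfrac12\sum_{y:\,P_{Y|X}(y|x)>0}P_{Y|X}(y|x)\left(\frac{\tfrac12\sum_{x'}P_{Y|X}(y|x')^{1/(1+\rho)}}{P_{Y|X}(y|x)^{1/(1+\rho)}}\right)^{\rho},$$ and $E_0(\rho)=-\log F(\rho)$. The dispersion is $V=-E_0''(0)$. $V^{\rm bec}(C)$ and $V^{\rm bsc}(C)$ are $-\frac{d^2}{d\rho^2}\bigl(-\log F^{\rm bec}(\rho;C)\bigr)\big|_{\rho=0}$ and $-\frac{d^2}{d\rho^2}\bigl(-\log F^{\rm bsc}(\rho;C)\bigr)\big|_{\rho=0}$, respectively, where $$F^{\rm bec}(\rho;C)=1+(2^{-\rho}-1)C,$$ $$F^{\rm bsc}(\rho;C)=2^{-\rho}\bigl(\varepsilon^{1/(1+\rho)}+(1-\varepsilon)^{1/(1+\rho)}\bigr)^{1+\rho},\qquad \varepsilon=h^{-1}(1-C),$$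 $h$ is the binary entropy function and $h^{-1}$ its inverse on $[0,\tfrac12]$. *)

From Stdlib Require Import Reals Lra List Permutation Arith.
Import ListNotations.
Open Scope R_scope.

Definition sumR (m : nat) (f : nat -> R) : R :=
  fold_right Rplus 0 (map f (seq 0 m)).

Definition log2 (x : R) : R := ln x / ln 2.

(** Real power x^y for x >= 0 with the convention 0^y = 0 (used for y > 0).
    (Stdlib's [Rpower 0 y] would be 1, so we guard it.) *)
Definition pw (x y : R) : R := if Rle_dec x 0 then 0 else Rpower x y.

Definition xlog2 (x : R) : R := if Rle_dec x 0 then 0 else x * log2 x.
Definition hb (p : R) : R := - xlog2 p - xlog2 (1 - p).

(** A channel: inputs x0 = false, x1 = true; outputs 0..m-1;
    P x y = P_{Y|X}(y|x). *)
Definition is_channel (m : nat) (P : bool -> nat -> R) : Prop :=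
  (forall x y, (y < m)%nat -> 0 <= P x y) /\
  (forall x, sumR m (P x) = 1).

(** Gallager symmetry for a 2-row matrix: the columns are partitioned into
    blocks (labelled by [blk]); inside each block the two rows are
    permutations of each other, and every column is a permutation of every
    other column. *)
Definition gallager_symmetric (m : nat) (P : bool -> nat -> R) : Prop :=
  exists blk : nat -> nat,
    (forall b : nat,
        Permutation
          (map (P false) (filter (fun y => Nat.eqb (blk y) b) (seq 0 m)))
          (map (P true)  (filter (fun y => Nat.eqb (blk y) b) (seq 0 m)))) /\
    (forall y y', (y < m)%nat -> (y' < m)%nat -> blk y = blk y' ->
        Permutation [P false y; P true y] [P false y'; P true y']).

Definition is_BIMS (m : nat) (P : bool -> nat -> R) : Prop :=
  is_channel m P /\ gallager_symmetric m P.

Definition PY (P : bool -> nat -> R) (y : nat) : R :=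
  / 2 * (P false y + P true y).

Definition avgX (g : bool -> R) : R := / 2 * g false + / 2 * g true.

Definition capacity (m : nat) (P : bool -> nat -> R) : R :=
  avgX (fun x => sumR m (fun y =>
    if Rlt_dec 0 (P x y) then P x y * log2 (P x y / PY P y) else 0)).

Definition F (m : nat) (P : bool -> nat -> R) (rho : R) : R :=
  avgX (fun x => sumR m (fun y =>
    if Rlt_dec 0 (P x y) then
      P x y *
      pw ((/ 2 * (pw (P false y) (/ (1 + rho)) + pw (P true y) (/ (1 + rho))))
           / pw (P x y) (/ (1 + rho))) rho
    else 0)).

Definition E0 (m : nat) (P : bool -> nat -> R) (rho : R) : R :=
  - log2 (F m P rho).

Definition Fbec (rho C : R) : R := 1 + (Rpower 2 (- rho) - 1) * C.

Definition Fbsc (rho eps : R) : R :=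
  Rpower 2 (- rho) *
  pw (pw eps (/ (1 + rho)) + pw (1 - eps) (/ (1 + rho))) (1 + rho).

Definition second_deriv (f : R -> R) (x0 l : R) : Prop :=
  exists (f' : R -> R) (delta : R),
    0 < delta /\
    (forall x, Rabs (x - x0) < delta -> derivable_pt_lim f x (f' x)) /\
    derivable_pt_lim f' x0 l.

(** Write [w_y = P_Y(y)] for the output law under equiprobable inputs and
    [i(x,y) = log2 (P(y|x) / w_y)] for the information density.
    1. Second-order jets at [rho = 0] (value and first two derivatives, the
       first derivative existing near 0) are closed under sums, products and
       composition with [exp], [ln], [/].  This computes [F(0) = 1],
       [F'(0) = -ln 2 * C] and [F''(0) = (ln 2)^2 * M] with [M = E[i^2]], so
       [V = -E0''(0) = ln 2 * (M - C^2)]; likewise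
       [V^bec = ln 2 * (C - C^2)] and [V^bsc = ln 2 * (f(eps) - c(eps)^2)],
       where [c] and [f] are the first two moments of [i] for a BSC.
    2. Output [y] contributes [w_y * c(p_y)] to [C] and [w_y * f(p_y)] to [M],
       with [p_y = P(y|0) / (P(y|0) + P(y|1))]; an output seen from only one
       input contributes [w_y] to both.
    3. For the BSC, [c <= f] (giving [C <= M], the BEC bound), and [f] is a
       concave function of [c]: it lies below its tangent lines, also at the
       noiseless endpoint [(1, 1)].  Summing over outputs the tangent at [eps]
       gives [M <= f(eps)] when [c(eps) = C] (the BSC bound). *)

From Stdlib Require Import Reals Lra Lia List.
From Coquelicot Require Import Coquelicot.
Open Scope R_scope.

(** ** Second-order jets at 0 *)

Definition jet2 (f : R -> R) (a0 a1 a2 : R) : Prop :=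
  exists f' : R -> R,
    (forall x, Rabs x < /2 -> derivable_pt_lim f x (f' x)) /\
    f 0 = a0 /\ f' 0 = a1 /\ derivable_pt_lim f' 0 a2.

Lemma Rabs0_lt_half : Rabs 0 < /2.
Proof. rewrite Rabs_R0; lra. Qed.

Lemma jet2_second_deriv f a0 a1 a2 : jet2 f a0 a1 a2 -> second_deriv f 0 a2.
Proof.
  intros [f' [Hf [_ [_ H2]]]]. exists f', (/2). repeat split; [lra| |exact H2].
  intros x Hx. apply Hf. rewrite Rminus_0_r in Hx; exact Hx.
Qed.

Lemma jet2_congr f a0 a1 a2 b0 b1 b2 :
  jet2 f a0 a1 a2 -> a0 = b0 -> a1 = b1 -> a2 = b2 -> jet2 f b0 b1 b2.
Proof. intros H <- <- <-; exact H. Qed.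

Lemma jet2_ext f g a0 a1 a2 : jet2 f a0 a1 a2 ->
  (forall x, Rabs x < /2 -> f x = g x) -> jet2 g a0 a1 a2.
Proof.
  intros [f' [Hf [H0 [H1 H2]]]] E.
  exists f'. repeat split; auto.
  - intros x Hx. apply (derivable_pt_lim_locally_ext f g x (-/2) (/2)).
    + apply Rabs_def2 in Hx; lra.
    + intros z Hz. apply E. apply Rabs_def1; lra.
    + auto.
  - rewrite <- E; [exact H0 | exact Rabs0_lt_half].
Qed.

Lemma jet2_const c : jet2 (fun _ => c) c 0 0.
Proof.
  exists (fun _ => 0). repeat split.
  - intros x _. apply derivable_pt_lim_const.
  - apply derivable_pt_lim_const.
Qed.

Lemma jet2_id : jet2 (fun x => x) 0 1 0.
Proof.
  exists (fun _ => 1). repeat split.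
  - intros x _. apply derivable_pt_lim_id.
  - apply derivable_pt_lim_const.
Qed.

Lemma jet2_plus f g a0 a1 a2 b0 b1 b2 :
  jet2 f a0 a1 a2 -> jet2 g b0 b1 b2 ->
  jet2 (fun x => f x + g x) (a0 + b0) (a1 + b1) (a2 + b2).
Proof.
  intros [f' [Hf [H0 [H1 H2]]]] [g' [Hg [K0 [K1 K2]]]].
  exists (fun x => f' x + g' x). repeat split.
  - intros x Hx. apply (derivable_pt_lim_plus f g x); auto.
  - lra.
  - lra.
  - apply (derivable_pt_lim_plus f' g' 0); auto.
Qed.

Lemma jet2_mult f g a0 a1 a2 b0 b1 b2 :
  jet2 f a0 a1 a2 -> jet2 g b0 b1 b2 ->
  jet2 (fun x => f x * g x) (a0 * b0) (a1 * b0 + a0 * b1)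
     (a2 * b0 + 2 * a1 * b1 + a0 * b2).
Proof.
  intros [f' [Hf [H0 [H1 H2]]]] [g' [Hg [K0 [K1 K2]]]].
  exists (fun x => f' x * g x + f x * g' x). repeat split.
  - intros x Hx. apply (derivable_pt_lim_mult f g x); auto.
  - rewrite H0, K0; lra.
  - rewrite H0, K0, H1, K1; lra.
  - replace (a2 * b0 + 2 * a1 * b1 + a0 * b2) with
      ((a2 * g 0 + f' 0 * b1) + (a1 * g' 0 + f 0 * b2))
      by (rewrite H0, K0, H1, K1; ring).
    apply (derivable_pt_lim_plus (fun x => f' x * g x) (fun x => f x * g' x) 0).
    + apply (derivable_pt_lim_mult f' g 0); auto.
      rewrite <- K1; apply Hg, Rabs0_lt_half.
    + apply (derivable_pt_lim_mult f g' 0); auto.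
      rewrite <- H1; apply Hf, Rabs0_lt_half.
Qed.

Lemma jet2_comp (phi phi' : R -> R) (Dm : R -> Prop) f a0 a1 a2 c2 :
  jet2 f a0 a1 a2 ->
  (forall x, Rabs x < /2 -> Dm (f x)) ->
  (forall z, Dm z -> derivable_pt_lim phi z (phi' z)) ->
  derivable_pt_lim phi' a0 c2 ->
  jet2 (fun x => phi (f x)) (phi a0) (phi' a0 * a1) (c2 * a1 * a1 + phi' a0 * a2).
Proof.
  intros [f' [Hf [H0 [H1 H2]]]] HD Hphi Hphi'.
  pose proof Rabs0_lt_half as Z.
  exists (fun x => phi' (f x) * f' x). repeat split.
  - intros x Hx. apply (derivable_pt_lim_comp f phi x); auto.
  - rewrite H0; reflexivity.
  - rewrite H0, H1; reflexivity.
  - replace (c2 * a1 * a1 + phi' a0 * a2) with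
      ((c2 * a1) * f' 0 + phi' (f 0) * a2) by (rewrite H0, H1; ring).
    assert (Hc : derivable_pt_lim (comp phi' f) 0 (c2 * a1)).
    { rewrite <- H1. apply (derivable_pt_lim_comp f phi' 0); auto. rewrite H0; auto. }
    exact (derivable_pt_lim_mult (comp phi' f) f' 0 _ _ Hc H2).
Qed.

Lemma jet2_exp f a0 a1 a2 : jet2 f a0 a1 a2 ->
  jet2 (fun x => exp (f x)) (exp a0) (exp a0 * a1) (exp a0 * a1 * a1 + exp a0 * a2).
Proof.
  intro H. apply (jet2_comp exp exp (fun _ => True)); auto.
  - intros; apply derivable_pt_lim_exp.
  - apply derivable_pt_lim_exp.
Qed.

Lemma derivable_pt_lim_Rinv z : z <> 0 -> derivable_pt_lim Rinv z (- / (z * z)).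
Proof.
  intro Hz. apply is_derive_Reals. auto_derive; [exact Hz | field; exact Hz].
Qed.

Lemma jet2_ln f a0 a1 a2 : jet2 f a0 a1 a2 ->
  (forall x, Rabs x < /2 -> 0 < f x) -> 0 < a0 ->
  jet2 (fun x => ln (f x)) (ln a0) (/ a0 * a1) (- / (a0 * a0) * a1 * a1 + / a0 * a2).
Proof.
  intros H Hp Ha. apply (jet2_comp ln Rinv (fun z => 0 < z)); auto.
  - intros; apply derivable_pt_lim_ln; auto.
  - apply derivable_pt_lim_Rinv; lra.
Qed.

Lemma jet2_inv f a0 a1 a2 : jet2 f a0 a1 a2 ->
  (forall x, Rabs x < /2 -> 0 < f x) -> 0 < a0 ->
  jet2 (fun x => / (f x)) (/ a0) (- / (a0 * a0) * a1)
     (2 / (a0 * a0 * a0) * a1 * a1 + - / (a0 * a0) * a2).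
Proof.
  intros H Hp Ha.
  apply (jet2_comp Rinv (fun z => - / (z * z)) (fun z => 0 < z)); auto.
  - intros; apply derivable_pt_lim_Rinv; lra.
  - apply is_derive_Reals. auto_derive; [nra | field; lra].
Qed.

Lemma jet2_gallager_exponent : jet2 (fun r => / (1 + r)) 1 (-1) 2.
Proof.
  eapply jet2_congr.
  - apply jet2_inv; [apply jet2_plus; [apply jet2_const | apply jet2_id] | | ].
    + intros x Hx; apply Rabs_def2 in Hx; lra.
    + lra.
  - field.
  - field.
  - field.
Qed.

Definition sumL (l : list nat) (f : nat -> R) : R := fold_right Rplus 0 (map f l).

Lemma sumR_sumL m f : sumR m f = sumL (seq 0 m) f.
Proof. reflexivity. Qed.

Lemma sumL_ext l f g : (forall y, In y l -> f y = g y) -> sumL l f = sumL l g.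
Proof.
  induction l as [|a l IH]; intros H; [reflexivity|].
  unfold sumL in *; simpl. rewrite H, IH; auto using in_eq, in_cons.
Qed.

Lemma sumL_plus l f g : sumL l (fun y => f y + g y) = sumL l f + sumL l g.
Proof. induction l; unfold sumL in *; simpl; [ring | rewrite IHl; ring]. Qed.

Lemma sumL_scal l c f : sumL l (fun y => c * f y) = c * sumL l f.
Proof. induction l; unfold sumL in *; simpl; [ring | rewrite IHl; ring]. Qed.

Lemma sumL_le l f g : (forall y, In y l -> f y <= g y) -> sumL l f <= sumL l g.
Proof.
  induction l as [|a l IH]; unfold sumL in *; simpl; intros H; [lra|].
  assert (f a <= g a) by auto.
  assert (fold_right Rplus 0 (map f l) <= fold_right Rplus 0 (map g l)) by auto.
  lra.
Qed.

Lemma sumL_nonneg l f : (forall y, In y l -> 0 <= f y) -> 0 <= sumL l f.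
Proof.
  induction l as [|a l IH]; unfold sumL in *; simpl; intros H; [lra|].
  assert (0 <= f a) by auto.
  assert (0 <= fold_right Rplus 0 (map f l)) by auto.
  lra.
Qed.

Lemma sumL_zero_each l f : (forall y, In y l -> 0 <= f y) -> sumL l f = 0 ->
  forall y, In y l -> f y = 0.
Proof.
  induction l as [|a l IH]; unfold sumL in *; simpl; intros H E y Hy; [contradiction|].
  assert (0 <= f a) by auto.
  assert (0 <= fold_right Rplus 0 (map f l)) by (apply sumL_nonneg; auto).
  destruct Hy as [<-|Hy]; [lra|]. apply IH; auto. lra.
Qed.

Lemma avgX_sumL l (f : bool -> nat -> R) :
  avgX (fun x => sumL l (f x)) = sumL l (fun y => avgX (fun x => f x y)).
Proof. unfold avgX. rewrite sumL_plus, !sumL_scal. reflexivity. Qed.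

Lemma jet2_sumL (g : nat -> R -> R) a b c l :
  (forall y, In y l -> jet2 (g y) (a y) (b y) (c y)) ->
  jet2 (fun r => sumL l (fun y => g y r)) (sumL l a) (sumL l b) (sumL l c).
Proof.
  induction l as [|y0 l IH]; intros H; unfold sumL in *; simpl.
  - apply jet2_const.
  - apply (jet2_plus (g y0) (fun r => fold_right Rplus 0 (map (fun y => g y r) l))).
    + apply H, in_eq.
    + apply IH; intros; apply H, in_cons; assumption.
Qed.

Lemma jet2_avgX (G : bool -> R -> R) a b c :
  (forall x, jet2 (G x) (a x) (b x) (c x)) ->
  jet2 (fun r => avgX (fun x => G x r)) (avgX a) (avgX b) (avgX c).
Proof.
  intros H. unfold avgX. eapply jet2_congr.
  - apply jet2_plus; apply jet2_mult; (apply jet2_const || apply H).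
  - ring.
  - ring.
  - ring.
Qed.

(** ** The jet of Gallager's function [F] *)

Lemma mix_exp_pos al be u v :
  0 <= al -> 0 <= be -> 0 < al + be -> 0 < al * exp u + be * exp v.
Proof.
  intros Ha Hb Hab. pose proof (exp_pos u). pose proof (exp_pos v).
  assert (0 <= al * exp u) by (apply Rmult_le_pos; lra).
  assert (0 <= be * exp v) by (apply Rmult_le_pos; lra).
  destruct (Rle_lt_dec al 0).
  - assert (0 < be * exp v) by (apply Rmult_lt_0_compat; lra). lra.
  - assert (0 < al * exp u) by (apply Rmult_lt_0_compat; lra). lra.
Qed.

(** The generic shape of a summand of [F]: with [s = 1/(1+r)],
    [K * (((al e^(l0 s) + be e^(l1 s)) / e^(lx s)) ^ r)]. *)
Definition gallager_term (K al be l0 l1 lx r : R) : R :=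
  K * exp (r * ln ((al * exp (l0 * / (1 + r)) + be * exp (l1 * / (1 + r)))
                   * exp (- lx * / (1 + r)))).

Lemma jet2_gallager_term K al be l0 l1 lx :
  0 <= al -> 0 <= be -> 0 < al + be ->
  let Q := al * exp l0 + be * exp l1 in
  let N := al * l0 * exp l0 + be * l1 * exp l1 in
  jet2 (gallager_term K al be l0 l1 lx) K (K * (ln Q - lx))
    (K * ((ln Q - lx) * (ln Q - lx) + 2 * (lx - N / Q))).
Proof.
  intros Ha Hb Hab Q N.
  assert (HQ : 0 < Q) by (apply mix_exp_pos; assumption).
  assert (Elx : exp lx <> 0) by apply Rgt_not_eq, exp_pos.
  unfold gallager_term. eapply jet2_congr.
  - apply jet2_mult; [apply jet2_const|].
    apply jet2_exp, jet2_mult; [apply jet2_id|].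
    apply jet2_ln.
    + apply jet2_mult; [apply jet2_plus|];
        repeat (apply jet2_mult || apply jet2_exp || apply jet2_const
                || apply jet2_gallager_exponent).
    + intros x _. apply Rmult_lt_0_compat; [apply mix_exp_pos; assumption | apply exp_pos].
    + rewrite !Rmult_1_r. apply Rmult_lt_0_compat; [exact HQ | apply exp_pos].
  - rewrite Rmult_0_l, exp_0; ring.
  - rewrite !Rmult_1_r, ln_mult, ln_exp by (exact HQ || apply exp_pos).
    rewrite !Rmult_0_l, exp_0. unfold Q. ring.
  - rewrite !Rmult_1_r, ln_mult, ln_exp by (exact HQ || apply exp_pos).
    rewrite !Rmult_0_l, exp_0, exp_Ropp. unfold Q, N in *. field. lra.
Qed.

Definition ind (p : R) : R := if Rle_dec p 0 then 0 else 1.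
Definition xlnx (p : R) : R := if Rle_dec p 0 then 0 else p * ln p.

Lemma pw_exp_ln p y : pw p y = ind p * exp (ln p * y).
Proof. unfold pw, ind, Rpower. destruct (Rle_dec p 0); [ring | rewrite Rmult_comm; ring]. Qed.

Lemma ind_half_nonneg p : 0 <= ind p / 2.
Proof. unfold ind; destruct (Rle_dec p 0); lra. Qed.

Lemma ind_exp_ln p : 0 <= p -> ind p / 2 * exp (ln p) = p / 2.
Proof.
  unfold ind; intros; destruct (Rle_dec p 0).
  - replace p with 0 by lra. field.
  - rewrite exp_ln; [field | lra].
Qed.

Lemma ind_xlnx p : 0 <= p -> ind p / 2 * ln p * exp (ln p) = / 2 * xlnx p.
Proof.
  unfold ind, xlnx; intros; destruct (Rle_dec p 0); [field | rewrite exp_ln; [field | lra]].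
Qed.

Definition ldens (P : bool -> nat -> R) (x : bool) (y : nat) : R :=
  ln (P x y) - ln (PY P y).

(** Posterior mean of [ln P(y|X)] given [Y = y]. *)
Definition cond_ln (P : bool -> nat -> R) (y : nat) : R :=
  (/ 2 * (xlnx (P false y) + xlnx (P true y))) / PY P y.

Definition F_summand (P : bool -> nat -> R) (x : bool) (y : nat) (r : R) : R :=
  if Rlt_dec 0 (P x y) then
    P x y * pw ((/ 2 * (pw (P false y) (/ (1 + r)) + pw (P true y) (/ (1 + r))))
                 / pw (P x y) (/ (1 + r))) r
  else 0.

Lemma jet2_F_summand P x y : 0 <= P false y -> 0 <= P true y ->
  jet2 (F_summand P x y)
    (if Rlt_dec 0 (P x y) then P x y else 0)
    (if Rlt_dec 0 (P x y) then - (P x y * ldens P x y) else 0)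
    (if Rlt_dec 0 (P x y) then
       P x y * (ldens P x y * ldens P x y + 2 * (ln (P x y) - cond_ln P y)) else 0).
Proof.
  intros H0 H1. unfold F_summand.
  destruct (Rlt_dec 0 (P x y)) as [Hx|_]; [|apply jet2_const].
  set (p0 := P false y) in *. set (p1 := P true y) in *.
  assert (Hind : 0 < ind p0 / 2 + ind p1 / 2).
  { unfold ind. destruct x; destruct (Rle_dec p0 0); destruct (Rle_dec p1 0);
      unfold p0, p1 in *; lra. }
  assert (Hw : 0 < / 2 * (p0 + p1)) by (destruct x; unfold p0, p1 in *; lra).
  eapply jet2_congr.
  - eapply jet2_ext.
    + apply (jet2_gallager_term (P x y) (ind p0 / 2) (ind p1 / 2) (ln p0) (ln p1) (ln (P x y)));
        [apply ind_half_nonneg | apply ind_half_nonneg | exact Hind].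
    + intros r _. unfold gallager_term. f_equal.
      rewrite (pw_exp_ln p0), (pw_exp_ln p1), (pw_exp_ln (P x y)).
      replace (ind (P x y)) with 1 by (unfold ind; destruct (Rle_dec (P x y) 0); lra).
      set (s := / (1 + r)).
      set (B := (ind p0 / 2 * exp (ln p0 * s) + ind p1 / 2 * exp (ln p1 * s))
                * exp (- ln (P x y) * s)).
      assert (HB : 0 < B).
      { apply Rmult_lt_0_compat; [apply mix_exp_pos | apply exp_pos];
          (apply ind_half_nonneg || exact Hind). }
      replace (/ 2 * (ind p0 * exp (ln p0 * s) + ind p1 * exp (ln p1 * s))
                / (1 * exp (ln (P x y) * s))) with B.
      * unfold pw, Rpower. destruct (Rle_dec B 0); [lra | reflexivity].
      * unfold B. rewrite Ropp_mult_distr_l_reverse, exp_Ropp. field.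
        apply Rgt_not_eq, exp_pos.
  - reflexivity.
  - rewrite !ind_exp_ln by assumption. unfold ldens, PY. fold p0 p1.
    replace (p0 / 2 + p1 / 2) with (/ 2 * (p0 + p1)) by field. ring.
  - rewrite !ind_exp_ln, !ind_xlnx by assumption. unfold ldens, cond_ln, PY. fold p0 p1.
    replace (p0 / 2 + p1 / 2) with (/ 2 * (p0 + p1)) by field. field. lra.
Qed.

Lemma ln2_pos : 0 < ln 2.
Proof. rewrite <- ln_1; apply ln_increasing; lra. Qed.

Definition info_m2 (m : nat) (P : bool -> nat -> R) : R :=
  avgX (fun x => sumR m (fun y =>
    if Rlt_dec 0 (P x y) then
      P x y * (log2 (P x y / PY P y) * log2 (P x y / PY P y))
    else 0)).

Lemma log2_ldens P x y : 0 < P x y -> 0 <= P false y -> 0 <= P true y ->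
  log2 (P x y / PY P y) = ldens P x y / ln 2.
Proof.
  intros Hx H0 H1. assert (0 < PY P y) by (unfold PY; destruct x; lra).
  unfold log2, ldens, Rdiv. rewrite ln_mult, ln_Rinv; auto using Rinv_0_lt_compat.
Qed.

(** [ln P(y|X)] minus its posterior mean averages to zero; this kills the
    cross term in [F''(0)]. *)
Lemma cross_term_vanishes P y : 0 <= P false y -> 0 <= P true y ->
  avgX (fun x => if Rlt_dec 0 (P x y) then P x y * (ln (P x y) - cond_ln P y) else 0) = 0.
Proof.
  intros H0 H1. unfold avgX, cond_ln, xlnx, PY.
  destruct (Rlt_dec 0 (P false y)); destruct (Rlt_dec 0 (P true y));
    destruct (Rle_dec (P false y) 0); destruct (Rle_dec (P true y) 0); try lra.
  - field. lra.
  - replace (P true y) with 0 by lra. field. lra.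
  - replace (P false y) with 0 by lra. field. lra.
Qed.

Lemma jet2_F m P : is_channel m P ->
  jet2 (F m P) 1 (- ln 2 * capacity m P) (ln 2 * ln 2 * info_m2 m P).
Proof.
  intros [Hnn Hsum]. pose proof ln2_pos as L.
  assert (Hy : forall x y, In y (seq 0 m) -> 0 <= P x y).
  { intros x y Hy. apply in_seq in Hy. apply Hnn; lia. }
  change (jet2 (fun r => avgX (fun x => sumL (seq 0 m) (fun y => F_summand P x y r)))
            1 (- ln 2 * capacity m P) (ln 2 * ln 2 * info_m2 m P)).
  eapply jet2_congr.
  - apply jet2_avgX; intro x. apply jet2_sumL; intros y Hin.
    apply jet2_F_summand; apply Hy; exact Hin.
  -
    assert (Hx : forall x,
      sumL (seq 0 m) (fun y => if Rlt_dec 0 (P x y) then P x y else 0) = 1).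
    { intro x. rewrite <- (Hsum x). apply sumL_ext. intros y Hin.
      specialize (Hy x y Hin). destruct (Rlt_dec 0 (P x y)); lra. }
    unfold avgX. rewrite !Hx. lra.
  -
    assert (Hx : forall x,
      sumL (seq 0 m) (fun y => if Rlt_dec 0 (P x y) then - (P x y * ldens P x y) else 0)
      = - ln 2 * sumR m (fun y =>
          if Rlt_dec 0 (P x y) then P x y * log2 (P x y / PY P y) else 0)).
    { intro x. rewrite sumR_sumL, <- sumL_scal. apply sumL_ext. intros y Hin.
      destruct (Rlt_dec 0 (P x y)); [|ring].
      rewrite log2_ldens by (assumption || apply Hy; exact Hin). field. lra. }
    unfold capacity, avgX. rewrite !Hx. ring.
  -
    assert (Hx : forall x,
      sumL (seq 0 m) (fun y => if Rlt_dec 0 (P x y) then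
        P x y * (ldens P x y * ldens P x y + 2 * (ln (P x y) - cond_ln P y)) else 0)
      = ln 2 * ln 2 * sumR m (fun y => if Rlt_dec 0 (P x y) then
          P x y * (log2 (P x y / PY P y) * log2 (P x y / PY P y)) else 0)
        + 2 * sumL (seq 0 m) (fun y =>
          if Rlt_dec 0 (P x y) then P x y * (ln (P x y) - cond_ln P y) else 0)).
    { intro x. rewrite sumR_sumL, <- !sumL_scal, <- sumL_plus. apply sumL_ext. intros y Hin.
      destruct (Rlt_dec 0 (P x y)); [|ring].
      rewrite log2_ldens by (assumption || apply Hy; exact Hin). field. lra. }
    assert (Hcross : avgX (fun x => sumL (seq 0 m) (fun y =>
      if Rlt_dec 0 (P x y) then P x y * (ln (P x y) - cond_ln P y) else 0)) = 0).
    { rewrite avgX_sumL, (sumL_ext _ _ (fun _ => 0 * 0)).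
      - rewrite sumL_scal. ring.
      - intros y Hin. rewrite cross_term_vanishes by (apply Hy; exact Hin). ring. }
    unfold info_m2. unfold avgX in *. rewrite !Hx. lra.
Qed.

Lemma pw_pos p y : 0 < p -> 0 < pw p y.
Proof. intros; unfold pw; destruct (Rle_dec p 0); [lra | apply exp_pos]. Qed.

Lemma pw_nonneg p y : 0 <= pw p y.
Proof. unfold pw; destruct (Rle_dec p 0); [lra | left; apply exp_pos]. Qed.

Lemma sumL_pos_on_support l f g :
  (forall y, In y l -> 0 <= f y) -> (forall y, In y l -> 0 < g y -> 0 < f y) ->
  (forall y, In y l -> 0 <= g y) -> sumL l g = 1 -> 0 < sumL l f.
Proof.
  intros Hf Hfg Hg Hs.
  destruct (Rle_lt_dec (sumL l f) 0) as [H|H]; [|exact H].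
  assert (Z := sumL_zero_each l f Hf ltac:(pose proof (sumL_nonneg l f Hf); lra)).
  assert (sumL l g <= sumL l (fun _ => 0)).
  { apply sumL_le. intros y Hy. destruct (Hg y Hy) as [Hpos|<-]; [|lra].
    specialize (Hfg y Hy Hpos). rewrite Z in Hfg by exact Hy. lra. }
  assert (sumL l (fun _ => 0) <= sumL l f) by (apply sumL_le; exact Hf).
  lra.
Qed.

Lemma F_pos m P r : is_channel m P -> Rabs r < /2 -> 0 < F m P r.
Proof.
  intros [Hnn Hsum] Hr. apply Rabs_def2 in Hr.
  assert (H : forall x, 0 < sumL (seq 0 m) (fun y => F_summand P x y r)).
  { intro x. apply (sumL_pos_on_support _ _ (P x)).
    - intros y _. unfold F_summand. destruct (Rlt_dec 0 (P x y)); [|lra].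
      apply Rmult_le_pos; [lra | apply pw_nonneg].
    - intros y _ Hp. unfold F_summand. destruct (Rlt_dec 0 (P x y)); [|lra].
      apply Rmult_lt_0_compat, pw_pos; [exact Hp|].
      assert (0 < pw (P x y) (/ (1 + r))) by (apply pw_pos; exact Hp).
      pose proof (pw_nonneg (P false y) (/ (1 + r))).
      pose proof (pw_nonneg (P true y) (/ (1 + r))).
      apply Rdiv_lt_0_compat; [destruct x; lra | assumption].
    - intros y Hy. apply in_seq in Hy. apply Hnn; lia.
    - apply Hsum. }
  change (0 < avgX (fun x => sumL (seq 0 m) (fun y => F_summand P x y r))).
  unfold avgX. pose proof (H false). pose proof (H true). lra.
Qed.

Lemma jet2_E0 m P : is_channel m P ->
  jet2 (E0 m P) 0 (capacity m P)
    (- (ln 2 * (info_m2 m P - capacity m P * capacity m P))).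
Proof.
  intros Hc. pose proof ln2_pos as L.
  eapply jet2_congr.
  - eapply jet2_ext.
    + apply (jet2_mult (fun _ => - / ln 2) (fun r => ln (F m P r)));
        [apply jet2_const | apply jet2_ln; [apply jet2_F; exact Hc | | lra]].
      intros; apply F_pos; assumption.
    + intros r Hr. unfold E0, log2. field. lra.
  - rewrite ln_1. ring.
  - field. lra.
  - field. lra.
Qed.

Lemma jet2_Fbec C : 0 <= C <= 1 ->
  jet2 (fun rho => - log2 (Fbec rho C)) 0 C (- (ln 2 * (C - C * C))).
Proof.
  intros HC. pose proof ln2_pos as L.
  assert (Hpos : forall r, 0 < 1 + (exp (r * - ln 2) - 1) * C).
  { intros r. assert (0 < exp (r * - ln 2)) by apply exp_pos.
    destruct (Rle_lt_dec 1 (exp (r * - ln 2))); nra. }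
  eapply jet2_congr.
  - eapply jet2_ext.
    + apply (jet2_mult (fun _ => - / ln 2) (fun r => ln (1 + (exp (r * - ln 2) - 1) * C)));
        [apply jet2_const | apply jet2_ln].
      * apply jet2_plus; [apply jet2_const|].
        apply jet2_mult; [|apply jet2_const].
        apply jet2_plus; [|apply jet2_const].
        apply jet2_exp, jet2_mult; [apply jet2_id | apply jet2_const].
      * intros r _; apply Hpos.
      * apply Hpos.
    + intros r _. unfold Fbec, log2, Rpower.
      replace (- r * ln 2) with (r * - ln 2) by ring. field. lra.
  - rewrite Rmult_0_l, exp_0. replace (1 + (1 + - (1)) * C) with 1 by ring.
    rewrite ln_1. ring.
  - replace (0 * - ln 2) with 0 by ring. rewrite exp_0. field. lra.
  - replace (0 * - ln 2) with 0 by ring. rewrite exp_0. field. lra.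
Qed.

(** ** Moments of the information density of a binary symmetric channel *)

Definition ent_sum (t : R) : R := t * ln t + (1 - t) * ln (1 - t).
Definition ent_sq_sum (t : R) : R := t * (ln t * ln t) + (1 - t) * (ln (1 - t) * ln (1 - t)).

(** [bsc_cap t = 1 - h(t)] is the capacity and [bsc_m2 t] the second moment of
    the information density of the BSC with crossover probability [t]. *)
Definition bsc_cap (t : R) : R := 1 + ent_sum t / ln 2.
Definition bsc_m2 (t : R) : R := 1 + 2 * ent_sum t / ln 2 + ent_sq_sum t / (ln 2 * ln 2).

Lemma jet2_Fbsc eps : 0 < eps < 1 ->
  jet2 (fun rho => - log2 (Fbsc rho eps)) 0 (bsc_cap eps)
     (- (ln 2 * (bsc_m2 eps - bsc_cap eps * bsc_cap eps))).
Proof.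
  intros He. pose proof ln2_pos as L.
  set (a := ln eps). set (b := ln (1 - eps)).
  assert (Ea : exp a = eps) by (apply exp_ln; lra).
  assert (Eb : exp b = 1 - eps) by (apply exp_ln; lra).
  eapply jet2_congr.
  - eapply jet2_ext.
    + apply (jet2_mult (fun _ => - / ln 2)
        (fun r => r * (- ln 2) + (1 + r) * ln (exp (a * / (1 + r)) + exp (b * / (1 + r)))));
        [apply jet2_const | apply jet2_plus].
      * apply jet2_mult; [apply jet2_id | apply jet2_const].
      * apply jet2_mult; [apply jet2_plus; [apply jet2_const | apply jet2_id]|].
        apply jet2_ln.
        -- apply jet2_plus; apply jet2_exp, jet2_mult;
             (apply jet2_const || apply jet2_gallager_exponent).
        -- intros r _. pose proof (exp_pos (a * / (1 + r))).
           pose proof (exp_pos (b * / (1 + r))). lra.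
        -- rewrite !Rmult_1_r, Ea, Eb. lra.
    + intros r Hr. apply Rabs_def2 in Hr.
      unfold Fbsc, log2, pw, Rpower.
      destruct (Rle_dec eps 0); [lra|]. destruct (Rle_dec (1 - eps) 0); [lra|].
      set (S := exp (/ (1 + r) * ln eps) + exp (/ (1 + r) * ln (1 - eps))).
      assert (HS : 0 < S).
      { unfold S. pose proof (exp_pos (/ (1 + r) * ln eps)).
        pose proof (exp_pos (/ (1 + r) * ln (1 - eps))). lra. }
      destruct (Rle_dec S 0); [lra|].
      rewrite ln_mult, !ln_exp by apply exp_pos.
      unfold S, a, b. rewrite (Rmult_comm (ln eps)), (Rmult_comm (ln (1 - eps))).
      field. lra.
  - rewrite !Rmult_1_r, Ea, Eb. replace (eps + (1 - eps)) with 1 by ring. rewrite ln_1. ring.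
  - rewrite !Rmult_1_r, Ea, Eb. replace (eps + (1 - eps)) with 1 by ring. rewrite ln_1.
    unfold bsc_cap, ent_sum. fold a b. field. lra.
  - rewrite !Rmult_1_r, Ea, Eb. replace (eps + (1 - eps)) with 1 by ring. rewrite ln_1.
    unfold bsc_cap, bsc_m2, ent_sum, ent_sq_sum. fold a b. field. lra.
Qed.

Lemma jet2_Fbsc0 : jet2 (fun rho => - log2 (Fbsc rho 0)) 0 1 0.
Proof.
  eapply jet2_ext; [apply jet2_id|].
  intros r Hr. apply Rabs_def2 in Hr. pose proof ln2_pos as L.
  assert (E1 : Rpower 1 (/ (1 + r)) = 1) by (unfold Rpower; rewrite ln_1, Rmult_0_r, exp_0; auto).
  unfold Fbsc, log2, pw. replace (1 - 0) with 1 by ring.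
  destruct (Rle_dec 0 0); [|lra]. destruct (Rle_dec 1 0); [lra|].
  rewrite E1, Rplus_0_l. destruct (Rle_dec 1 0); [lra|].
  unfold Rpower; rewrite ln_1, Rmult_0_r, exp_0, Rmult_1_r, ln_exp. field. lra.
Qed.

Lemma ln_le_sub1 x : 0 < x -> ln x <= x - 1.
Proof. intros Hx. pose proof (exp_ineq1_le (ln x)). rewrite exp_ln in H; lra. Qed.

Lemma ln_ge_1_sub_inv x : 0 < x -> 1 - / x <= ln x.
Proof.
  intros Hx. pose proof (ln_le_sub1 (/ x) (Rinv_0_lt_compat _ Hx)).
  rewrite ln_Rinv in H; lra.
Qed.

Lemma ln_neg t : 0 < t < 1 -> ln t < 0.
Proof. intros. rewrite <- ln_1. apply ln_increasing; lra. Qed.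

Lemma ent_sum_sym p : ent_sum (1 - p) = ent_sum p.
Proof. unfold ent_sum. replace (1 - (1 - p)) with p by ring. ring. Qed.

Lemma bsc_cap_sym p : bsc_cap (1 - p) = bsc_cap p.
Proof. unfold bsc_cap; rewrite ent_sum_sym; reflexivity. Qed.

Lemma bsc_m2_sym p : bsc_m2 (1 - p) = bsc_m2 p.
Proof.
  unfold bsc_m2, ent_sq_sum. rewrite ent_sum_sym.
  replace (1 - (1 - p)) with p by ring. f_equal. f_equal. ring.
Qed.

Lemma bsc_cap_bounds p : 0 < p < 1 -> 0 <= bsc_cap p < 1.
Proof.
  intros Hp. pose proof ln2_pos as L. unfold bsc_cap, ent_sum.
  pose proof (ln_neg p Hp). pose proof (ln_neg (1 - p) ltac:(lra)).
  pose proof (ln_ge_1_sub_inv (2 * p) ltac:(lra)) as c.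
  pose proof (ln_ge_1_sub_inv (2 * (1 - p)) ltac:(lra)) as d.
  rewrite ln_mult in c, d by lra.
  assert (e : p * (1 - / (2 * p)) <= p * (ln 2 + ln p)) by (apply Rmult_le_compat_l; lra).
  assert (f : (1 - p) * (1 - / (2 * (1 - p))) <= (1 - p) * (ln 2 + ln (1 - p)))
    by (apply Rmult_le_compat_l; lra).
  replace (p * (1 - / (2 * p))) with (p - / 2) in e by (field; lra).
  replace ((1 - p) * (1 - / (2 * (1 - p)))) with ((1 - p) - / 2) in f by (field; lra).
  assert (- ln 2 <= p * ln p + (1 - p) * ln (1 - p) < 0) by nra.
  split.
  - apply (Rmult_le_reg_r (ln 2)); [exact L|].
    rewrite Rmult_plus_distr_r. unfold Rdiv. rewrite Rmult_assoc, Rinv_l; lra.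
  - apply (Rmult_lt_reg_r (ln 2)); [exact L|].
    rewrite Rmult_plus_distr_r. unfold Rdiv. rewrite Rmult_assoc, Rinv_l; lra.
Qed.

(** [d bsc_m2 / d bsc_cap] at crossover [t]: the slope of the tangent to the
    curve [t |-> (bsc_cap t, bsc_m2 t)]. *)
Definition bsc_slope (t : R) : R := 2 + 2 / ln 2 + (ln t + ln (1 - t)) / ln 2.

Lemma derivable_bsc_gap K t : 0 < t < 1 ->
  derivable_pt_lim (fun t => bsc_m2 t - K * bsc_cap t) t
    ((ln t - ln (1 - t)) / ln 2 * (bsc_slope t - K)).
Proof.
  intros Ht. pose proof ln2_pos as L. apply is_derive_Reals.
  unfold bsc_m2, bsc_cap, ent_sum, ent_sq_sum, bsc_slope.
  auto_derive; [repeat split; lra|].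
  replace (1 + - t) with (1 - t) by ring. field. lra.
Qed.

Lemma bsc_slope_lt s t : 0 < s -> s < t -> t <= / 2 -> bsc_slope s < bsc_slope t.
Proof.
  intros. pose proof ln2_pos as L. unfold bsc_slope.
  rewrite <- !ln_mult by lra.
  assert (ln (s * (1 - s)) < ln (t * (1 - t))) by (apply ln_increasing; nra).
  apply Rplus_lt_compat_l. unfold Rdiv.
  apply Rmult_lt_compat_r; [apply Rinv_0_lt_compat; lra | assumption].
Qed.

Lemma ln_ratio_neg t : 0 < t < / 2 -> (ln t - ln (1 - t)) / ln 2 < 0.
Proof.
  intros. pose proof ln2_pos as L.
  assert (ln t < ln (1 - t)) by (apply ln_increasing; lra).
  apply Rdiv_neg_pos; lra.
Qed.

(** Concavity of [bsc_m2] as a function of [bsc_cap] on [(0, 1/2]]: the curve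
    lies below its tangent at [q].  The gap [bsc_m2 - k * bsc_cap] with
    [k = bsc_slope q] increases up to [q] and decreases after it. *)
Lemma bsc_tangent_half p q : 0 < p <= / 2 -> 0 < q <= / 2 ->
  bsc_m2 p - bsc_slope q * bsc_cap p <= bsc_m2 q - bsc_slope q * bsc_cap q.
Proof.
  intros Hp Hq.
  set (gap := fun t => bsc_m2 t - bsc_slope q * bsc_cap t).
  set (gap' := fun t => (ln t - ln (1 - t)) / ln 2 * (bsc_slope t - bsc_slope q)).
  change (gap p <= gap q).
  assert (Hd : forall c, 0 < c <= / 2 -> derivable_pt_lim gap c (gap' c)).
  { intros c Hc. apply derivable_bsc_gap. lra. }
  destruct (Rtotal_order p q) as [H|[H|H]].
  - destruct (MVT_cor2 gap gap' p q H) as [c [E Hc]]; [intros c Hc; apply Hd; lra|].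
    assert (gap' c > 0).
    { unfold gap'. pose proof (ln_ratio_neg c ltac:(lra)).
      pose proof (bsc_slope_lt c q ltac:(lra) ltac:(lra) ltac:(lra)). nra. }
    nra.
  - subst; lra.
  - destruct (MVT_cor2 gap gap' q p H) as [c [E Hc]]; [intros c Hc; apply Hd; lra|].
    assert (gap' c < 0).
    { unfold gap'. pose proof (ln_ratio_neg c ltac:(lra)).
      pose proof (bsc_slope_lt q c ltac:(lra) ltac:(lra) ltac:(lra)). nra. }
    nra.
Qed.

(** The tangent bound extends to all crossovers by the symmetry [t <-> 1-t]. *)
Lemma bsc_tangent p q : 0 < p < 1 -> 0 < q <= / 2 ->
  bsc_m2 p - bsc_slope q * bsc_cap p <= bsc_m2 q - bsc_slope q * bsc_cap q.
Proof.
  intros Hp Hq. destruct (Rle_lt_dec p (/ 2)).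
  - apply bsc_tangent_half; lra.
  - rewrite <- bsc_m2_sym, <- bsc_cap_sym. apply bsc_tangent_half; lra.
Qed.

(** The tangent bound also holds at the noiseless endpoint
    [(bsc_cap, bsc_m2) = (1, 1)]. *)
Lemma bsc_tangent_endpoint q : 0 < q <= / 2 ->
  1 - bsc_slope q <= bsc_m2 q - bsc_slope q * bsc_cap q.
Proof.
  intros Hq. pose proof ln2_pos as L.
  assert (E : bsc_m2 q - bsc_slope q * bsc_cap q - (1 - bsc_slope q) =
    (- 2 * q * ln q - 2 * (1 - q) * ln (1 - q) - ln q * ln (1 - q)) / (ln 2 * ln 2)).
  { unfold bsc_m2, bsc_slope, bsc_cap, ent_sum, ent_sq_sum. field. lra. }
  pose proof (ln_neg q ltac:(lra)). pose proof (ln_neg (1 - q) ltac:(lra)).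
  pose proof (ln_ge_1_sub_inv (1 - q) ltac:(lra)).
  assert (- (2 * q) <= ln (1 - q)).
  { assert (/ (1 - q) <= 2) by (rewrite <- (Rinv_inv 2); apply Rinv_le_contravar; lra).
    assert (q * / (1 - q) <= q * 2) by (apply Rmult_le_compat_l; lra).
    replace (1 - / (1 - q)) with (- (q * / (1 - q))) in * by (field; lra). lra. }
  assert (0 <= (- 2 * q * ln q - 2 * (1 - q) * ln (1 - q) - ln q * ln (1 - q))
               / (ln 2 * ln 2)) by (apply Rdiv_le_0_compat; nra).
  lra.
Qed.

Lemma bsc_half : bsc_m2 (/ 2) = 0 /\ bsc_cap (/ 2) = 0.
Proof.
  pose proof ln2_pos as L. unfold bsc_m2, bsc_cap, ent_sum, ent_sq_sum.
  replace (1 - / 2) with (/ 2) by field. rewrite ln_Rinv by lra. split; field; lra.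
Qed.

(** With
    [g = bsc_m2 - k * bsc_cap] ([k] the slope at [p]), the tangent bounds at
    [1/2] and at the endpoint give [g >= 0] and [g >= 1 - k]; their
    convex combination with weights [1 - bsc_cap], [bsc_cap] is
    [bsc_m2 - bsc_cap]. *)
Lemma bsc_cap_le_m2 p : 0 < p < 1 -> bsc_cap p <= bsc_m2 p.
Proof.
  assert (Hhalf : forall p, 0 < p <= / 2 -> bsc_cap p <= bsc_m2 p).
  { intros t Ht.
    pose proof (bsc_tangent_endpoint t Ht) as E1.
    pose proof (bsc_tangent_half (/ 2) t ltac:(lra) Ht) as E2.
    destruct bsc_half as [H1 H2]. rewrite H1, H2 in E2.
    pose proof (bsc_cap_bounds t ltac:(lra)).
    set (c := bsc_cap t) in *. set (k := bsc_slope t) in *. set (f := bsc_m2 t) in *.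
    assert (0 <= c * (f - k * c - (1 - k))) by (apply Rmult_le_pos; lra).
    assert (0 <= (1 - c) * (f - k * c)) by (apply Rmult_le_pos; lra).
    nra. }
  intros Hp. destruct (Rle_lt_dec p (/ 2)).
  - apply Hhalf; lra.
  - rewrite <- bsc_m2_sym, <- bsc_cap_sym. apply Hhalf; lra.
Qed.

(** ** Decomposition over outputs *)

(** Contributions of an output [y] with [P(y|0) = a], [P(y|1) = b] to the
    capacity and to the second moment [E[i^2]]. *)
Definition out_cap (a b : R) : R :=
  / 2 * (if Rlt_dec 0 a then a * log2 (a / (/ 2 * (a + b))) else 0)
  + / 2 * (if Rlt_dec 0 b then b * log2 (b / (/ 2 * (a + b))) else 0).

Definition out_m2 (a b : R) : R :=
  / 2 * (if Rlt_dec 0 a then a * Rsqr (log2 (a / (/ 2 * (a + b)))) else 0)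
  + / 2 * (if Rlt_dec 0 b then b * Rsqr (log2 (b / (/ 2 * (a + b)))) else 0).

Lemma log2_double p : 0 < p -> log2 (2 * p) = 1 + ln p / ln 2.
Proof. intros. pose proof ln2_pos. unfold log2. rewrite ln_mult by lra. field. lra. Qed.

(** An output seen from both inputs behaves, with weight [P_Y(y)], like a BSC
    with crossover [a / (a + b)]; an output seen from one input only is
    noiseless and contributes its weight to both quantities. *)
Lemma out_decomp a b : 0 <= a -> 0 <= b ->
  (0 < a / (a + b) < 1 /\ 0 < / 2 * (a + b) /\
   out_cap a b = / 2 * (a + b) * bsc_cap (a / (a + b)) /\
   out_m2 a b = / 2 * (a + b) * bsc_m2 (a / (a + b)))
  \/ (out_cap a b = / 2 * (a + b) /\ out_m2 a b = / 2 * (a + b)).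
Proof.
  intros Ha Hb. pose proof ln2_pos. unfold out_cap, out_m2, Rsqr.
  assert (L2 : log2 2 = 1) by (unfold log2; field; lra).
  destruct (Rlt_dec 0 a); destruct (Rlt_dec 0 b).
  - left. set (p := a / (a + b)).
    assert (Hp : 0 < p < 1).
    { unfold p; split; [apply Rdiv_lt_0_compat; lra|].
      apply (Rmult_lt_reg_r (a + b)); [lra|].
      unfold Rdiv. rewrite Rmult_assoc, Rinv_l; lra. }
    replace (a / (/ 2 * (a + b))) with (2 * p) by (unfold p; field; lra).
    replace (b / (/ 2 * (a + b))) with (2 * (1 - p)) by (unfold p; field; lra).
    rewrite !log2_double by lra.
    repeat split; try lra.
    + unfold bsc_cap, ent_sum, p. field. lra.
    + unfold bsc_m2, ent_sum, ent_sq_sum, p. field. lra.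
  - right. replace b with 0 by lra. rewrite Rplus_0_r.
    replace (a / (/ 2 * a)) with 2 by (field; lra). rewrite L2. split; ring.
  - right. replace a with 0 by lra. rewrite Rplus_0_l.
    replace (b / (/ 2 * b)) with 2 by (field; lra). rewrite L2. split; ring.
  - right. replace a with 0 by lra. replace b with 0 by lra. split; ring.
Qed.

Lemma out_cap_le_m2 a b : 0 <= a -> 0 <= b -> out_cap a b <= out_m2 a b.
Proof.
  intros Ha Hb. destruct (out_decomp a b Ha Hb) as [[Hp [Hw [-> ->]]]|[-> ->]]; [|lra].
  apply Rmult_le_compat_l; [lra | apply bsc_cap_le_m2; exact Hp].
Qed.

Lemma out_cap_bounds a b : 0 <= a -> 0 <= b -> 0 <= out_cap a b <= / 2 * (a + b).
Proof.
  intros Ha Hb. destruct (out_decomp a b Ha Hb) as [[Hp [Hw [-> _]]]|[-> _]]; [|lra].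
  pose proof (bsc_cap_bounds _ Hp). split; [apply Rmult_le_pos; lra|].
  rewrite <- (Rmult_1_r (/ 2 * (a + b))) at 2. apply Rmult_le_compat_l; lra.
Qed.

Lemma out_m2_noiseless a b : 0 <= a -> 0 <= b ->
  out_cap a b = / 2 * (a + b) -> out_m2 a b = / 2 * (a + b).
Proof.
  intros Ha Hb H. destruct (out_decomp a b Ha Hb) as [[Hp [Hw [E1 _]]]|[_ E2]]; [|exact E2].
  pose proof (bsc_cap_bounds _ Hp). rewrite E1 in H.
  assert (/ 2 * (a + b) * bsc_cap (a / (a + b)) < / 2 * (a + b) * 1)
    by (apply Rmult_lt_compat_l; lra).
  lra.
Qed.

Lemma out_m2_tangent a b q : 0 <= a -> 0 <= b -> 0 < q <= / 2 ->
  out_m2 a b <= / 2 * (a + b) * bsc_m2 q + bsc_slope q * (out_cap a b - / 2 * (a + b) * bsc_cap q).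
Proof.
  intros Ha Hb Hq. destruct (out_decomp a b Ha Hb) as [[Hp [Hw [-> ->]]]|[-> ->]].
  - pose proof (bsc_tangent _ _ Hp Hq).
    assert (0 <= / 2 * (a + b) * ((bsc_m2 q - bsc_slope q * bsc_cap q)
              - (bsc_m2 (a / (a + b)) - bsc_slope q * bsc_cap (a / (a + b)))))
      by (apply Rmult_le_pos; lra).
    nra.
  - pose proof (bsc_tangent_endpoint q Hq).
    assert (0 <= / 2 * (a + b) * ((bsc_m2 q - bsc_slope q * bsc_cap q) - (1 - bsc_slope q)))
      by (apply Rmult_le_pos; lra).
    nra.
Qed.

Section Channel.

Variable (m : nat) (P : bool -> nat -> R).
Hypothesis Hch : is_channel m P.

Lemma channel_nonneg y : In y (seq 0 m) -> 0 <= P false y /\ 0 <= P true y.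
Proof.
  intros Hy. apply in_seq in Hy. destruct Hch as [Hnn _]. split; apply Hnn; lia.
Qed.

Lemma capacity_sum : capacity m P = sumL (seq 0 m) (fun y => out_cap (P false y) (P true y)).
Proof. unfold capacity. apply avgX_sumL. Qed.

Lemma info_m2_sum : info_m2 m P = sumL (seq 0 m) (fun y => out_m2 (P false y) (P true y)).
Proof. unfold info_m2. apply avgX_sumL. Qed.

Lemma output_mass : sumL (seq 0 m) (fun y => / 2 * (P false y + P true y)) = 1.
Proof.
  destruct Hch as [_ Hsum].
  rewrite sumL_scal, sumL_plus, <- !sumR_sumL, !Hsum. field.
Qed.

Lemma capacity_bounds : 0 <= capacity m P <= 1.
Proof.
  rewrite capacity_sum, <- output_mass. split.
  - apply sumL_nonneg. intros y Hy. destruct (channel_nonneg y Hy). apply out_cap_bounds; auto.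
  - apply sumL_le. intros y Hy. destruct (channel_nonneg y Hy). apply out_cap_bounds; auto.
Qed.

Lemma capacity_le_info_m2 : capacity m P <= info_m2 m P.
Proof.
  rewrite capacity_sum, info_m2_sum. apply sumL_le.
  intros y Hy. destruct (channel_nonneg y Hy). apply out_cap_le_m2; auto.
Qed.

Lemma info_m2_tangent q : 0 < q <= / 2 ->
  info_m2 m P <= bsc_m2 q + bsc_slope q * (capacity m P - bsc_cap q).
Proof.
  intros Hq. rewrite info_m2_sum, capacity_sum.
  eapply Rle_trans.
  - apply sumL_le. intros y Hy. destruct (channel_nonneg y Hy).
    apply (out_m2_tangent _ _ q); auto.
  - set (w := fun y => / 2 * (P false y + P true y)).
    rewrite (sumL_ext _ _ (fun y => bsc_m2 q * w y + (bsc_slope q * out_cap (P false y) (P true y)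
                                     + (- (bsc_slope q * bsc_cap q)) * w y)))
      by (intros; unfold w; ring).
    rewrite !sumL_plus, !sumL_scal. unfold w. rewrite output_mass. lra.
Qed.

Lemma info_m2_noiseless : capacity m P = 1 -> info_m2 m P = 1.
Proof.
  intros HC1.
  set (gap := fun y => / 2 * (P false y + P true y) - out_cap (P false y) (P true y)).
  assert (Hgap : sumL (seq 0 m) gap = 0).
  { unfold gap. rewrite (sumL_ext _ _ (fun y => / 2 * (P false y + P true y)
                                              + (-1) * out_cap (P false y) (P true y)))
      by (intros; ring).
    rewrite sumL_plus, output_mass, sumL_scal, <- capacity_sum. lra. }
  assert (Hzero : forall y, In y (seq 0 m) -> gap y = 0).
  { apply sumL_zero_each; [|exact Hgap].
    intros y Hy. destruct (channel_nonneg y Hy) as [Ha Hb].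
    pose proof (out_cap_bounds _ _ Ha Hb). unfold gap; lra. }
  rewrite info_m2_sum, <- output_mass. apply sumL_ext. intros y Hy.
  destruct (channel_nonneg y Hy). apply out_m2_noiseless; auto.
  specialize (Hzero y Hy). unfold gap in Hzero. lra.
Qed.

End Channel.

Lemma bsc_cap_of_hb eps C : 0 < eps < 1 -> hb eps = 1 - C -> bsc_cap eps = C.
Proof.
  intros He Hhb. pose proof ln2_pos.
  unfold hb, xlog2, log2 in Hhb.
  destruct (Rle_dec eps 0); [lra|]. destruct (Rle_dec (1 - eps) 0); [lra|].
  unfold bsc_cap, ent_sum.
  replace C with (1 - (- (eps * (ln eps / ln 2)) - (1 - eps) * (ln (1 - eps) / ln 2))) by lra.
  field. lra.
Qed.

Lemma hb_zero : hb 0 = 0.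
Proof.
  unfold hb, xlog2. replace (1 - 0) with 1 by ring.
  destruct (Rle_dec 0 0); [|lra]. destruct (Rle_dec 1 0); [lra|].
  unfold log2. rewrite ln_1. field. apply Rgt_not_eq, ln2_pos.
Qed.

Theorem mainTheorem11 (m : nat) (P : bool -> nat -> R) :
  is_BIMS m P ->
  exists V Vbec : R,
    second_deriv (E0 m P) 0 (- V) /\
    second_deriv (fun rho => - log2 (Fbec rho (capacity m P))) 0 (- Vbec) /\
    Vbec <= V /\
    (forall eps : R, 0 <= eps <= / 2 -> hb eps = 1 - capacity m P ->
       exists Vbsc : R,
         second_deriv (fun rho => - log2 (Fbsc rho eps)) 0 (- Vbsc) /\
         V <= Vbsc).
Proof.
  intros [Hch _]. pose proof ln2_pos as L.
  set (C := capacity m P). set (M := info_m2 m P).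
  exists (ln 2 * (M - C * C)), (ln 2 * (C - C * C)).
  split; [|split; [|split]].
  - eapply jet2_second_deriv, jet2_E0, Hch.
  - eapply jet2_second_deriv, jet2_Fbec, capacity_bounds, Hch.
  - pose proof (capacity_le_info_m2 m P Hch) as HCM. fold C M in HCM.
    apply Rmult_le_compat_l; lra.
  - intros eps Heps Hhb. destruct (Rle_lt_or_eq_dec 0 eps (proj1 Heps)) as [Hpos|<-].
    + assert (Hc : bsc_cap eps = C) by (apply bsc_cap_of_hb; [lra | exact Hhb]).
      pose proof (info_m2_tangent m P Hch eps ltac:(lra)) as HM.
      fold C M in HM. rewrite Hc in HM.
      exists (ln 2 * (bsc_m2 eps - bsc_cap eps * bsc_cap eps)). split.
      * eapply jet2_second_deriv, jet2_Fbsc. lra.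
      * rewrite Hc. apply Rmult_le_compat_l; lra.
    + (* noiseless channel: C = 1 = E[i^2], V = 0 *)
      assert (HC1 : C = 1) by (rewrite hb_zero in Hhb; lra).
      pose proof (info_m2_noiseless m P Hch HC1) as HM1.
      exists 0. split.
      * rewrite Ropp_0. eapply jet2_second_deriv, jet2_Fbsc0.
      * fold M in HM1. rewrite HC1, HM1. lra.
Qed.
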